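(* Let $K\subseteq\Sigma^*$ be a bounded context-free language. Then there exists a bounded regular language $R\supseteq K$ such that $\{|w|:w\in K\}=\{|w|:w\in R\}$ and $\Psi(K)=\Psi(R)$.
   Context: A language is bounded if it is contained in $w_1^*\cdots w_k^*$ for some words $w_1,\dots,w_k$. For $a_1\cdots a_n\in\Sigma^*$, $\Psi(a_1\cdots a_n)=\{(a_1,n),(a_2,n-1),\dots,(a_n,1)\}$, and $\Psi(L)=\bigcup_{w\in L}\Psi(w)$. *)

From Stdlib Require List.
From mathcomp Require Import all_boot.
Set Implicit Arguments. Unset Strict Implicit. Unset Printing Implicit Defensive.

Definition lang (Sigma : Type) := seq Sigma -> Prop.

Record grammar (N Sigma : Type) := Grammar {
  productions : seq (N * seq (N + Sigma));
  start : N }.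

Inductive step (N Sigma : Type) (G : grammar N Sigma) :
    seq (N + Sigma) -> seq (N + Sigma) -> Prop :=
| Step u v A alpha :
    List.In (A, alpha) (productions G) ->
    step G (u ++ inl A :: v) (u ++ alpha ++ v).

Inductive derives (N Sigma : Type) (G : grammar N Sigma) :
    seq (N + Sigma) -> seq (N + Sigma) -> Prop :=
| derives_refl x : derives G x x
| derives_step x y z : step G x y -> derives G y z -> derives G x z.

Definition grammar_lang (N Sigma : Type) (G : grammar N Sigma) : lang Sigma :=
  fun w => derives G [:: inl (start G)] (map inr w).

Definition context_free (Sigma : finType) (L : lang Sigma) : Prop :=
  exists (N : finType) (G : grammar N Sigma),
    forall w, L w <-> grammar_lang G w.

Definition regular (Sigma : finType) (L : lang Sigma) : Prop :=
  exists (Q : finType) (delta : Q -> Sigma -> Q) (q0 : Q) (F : pred Q),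
    forall w, L w <-> F (foldl delta q0 w).

(* w belongs to ws_1^* ... ws_k^* (ws = [:: ws_1; ...; ws_k]). *)
Definition in_star_prod (Sigma : Type) (ws : seq (seq Sigma)) (w : seq Sigma) : Prop :=
  exists ns : seq nat, size ns = size ws /\
    w = flatten (map (fun p => flatten (nseq p.2 p.1)) (zip ws ns)).

Definition bounded (Sigma : Type) (L : lang Sigma) : Prop :=
  exists ws : seq (seq Sigma), forall w, L w -> in_star_prod ws w.

(* Psi(a_1 ... a_n) = {(a_1, n), (a_2, n-1), ..., (a_n, 1)}:
   the letter at 0-based position i is paired with n - i. *)
Definition Psi (Sigma : Type) (w : seq Sigma) (p : Sigma * nat) : Prop :=
  exists2 i, i < size w & p = (nth p.1 w i, size w - i).

Definition PsiL (Sigma : Type) (L : lang Sigma) (p : Sigma * nat) : Prop :=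
  exists2 w, L w & Psi w p.

Definition lengths (Sigma : Type) (L : lang Sigma) (n : nat) : Prop :=
  exists2 w, L w & size w = n.

From mathcomp Require Import all_boot zify boolp.
Set Implicit Arguments. Unset Strict Implicit. Unset Printing Implicit Defensive.

(* Take for R the words of w_1^* ... w_k^* whose length is the length of a word
   of K and all of whose pairs lie in Psi(K). R is regular because the sets {|w| : w in K}
   and {j : (b, j) in Psi(K)} are ultimately periodic with a common threshold T
   and period p: they are generated by unary context-free grammars built from a
   grammar of K, and in a derivation of minimal size of a long enough word some
   nonterminal repeats close to the leaves, giving a cycle that adds a bounded,
   nonzero number of letters, hence can be iterated to add any multiple of p.
   An automaton then only has to remember |w| and the pairs of Psi(w) up to
   this periodicity. *)

Section GrammarTrees.

Variables (N Sigma : Type) (G : grammar N Sigma).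

Inductive gen : N -> seq Sigma -> Prop :=
| gen_rule A alpha w : List.In (A, alpha) (productions G) -> gens alpha w -> gen A w
with gens : seq (N + Sigma) -> seq Sigma -> Prop :=
| gens_nil : gens [::] [::]
| gens_term a alpha w : gens alpha w -> gens (inr a :: alpha) (a :: w)
| gens_nonterm B alpha u w : gen B u -> gens alpha w -> gens (inl B :: alpha) (u ++ w).

Scheme gen_mut_ind := Induction for gen Sort Prop
with gens_mut_ind := Induction for gens Sort Prop.
Combined Scheme gen_gens_ind from gen_mut_ind, gens_mut_ind.

Lemma gens_cat alpha beta u w :
  gens alpha u -> gens beta w -> gens (alpha ++ beta) (u ++ w).
Proof.
elim=> {alpha u} [//|a alpha u _ IH|B alpha v u HB _ IH] Hw /=.
  by apply: gens_term; apply: IH.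
by rewrite -catA; apply: gens_nonterm HB (IH Hw).
Qed.

Lemma gens_catP alpha beta w :
  gens (alpha ++ beta) w ->
  exists u v, [/\ w = u ++ v, gens alpha u & gens beta v].
Proof.
elim: alpha w => [|x alpha IH] w /=; first by exists [::], w; split=> //; apply: gens_nil.
move=> H; inversion H as [|a ? w' Hw|B ? u w' HB Hw]; subst.
  have [u [v [-> Hu Hv]]] := IH _ Hw.
  by exists (a :: u), v; split=> //; apply: gens_term.
have [u' [v [-> Hu Hv]]] := IH _ Hw.
by exists (u ++ u'), v; split; [rewrite catA | apply: gens_nonterm |].
Qed.

Lemma gens_map_inr w : gens (map inr w) w.
Proof. by elim: w => [|a w IH]; [apply: gens_nil | apply: gens_term]. Qed.

Lemma derives_gens alpha w : derives G alpha (map inr w) -> gens alpha w.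
Proof.
move Ew: (map inr w) => beta H; elim: H w Ew => {alpha beta} [_ w <-|x y z Hxy _ IH w Ez].
  exact: gens_map_inr.
case: Hxy (IH w Ez) => u v A alpha HA /gens_catP [w1 [w' [-> H1 /gens_catP]]].
move=> [w2 [w3 [-> H2 H3]]].
by apply: gens_cat H1 _; apply: (gens_nonterm (gen_rule HA H2) H3).
Qed.

Lemma derives_trans x y z : derives G x y -> derives G y z -> derives G x z.
Proof. by elim=> {x y} // x y y' Hxy _ IH /IH; apply: derives_step. Qed.

Lemma derives_frame p q x y :
  derives G x y -> derives G (p ++ x ++ q) (p ++ y ++ q).
Proof.
elim=> {x y} [x|x y z Hxy _ IH]; first exact: derives_refl.
apply: derives_step IH; case: Hxy => u v A alpha HA.
by have := Step (p ++ u) (v ++ q) HA; rewrite -!catA.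
Qed.

Lemma gen_derives :
  (forall A w, gen A w -> derives G [:: inl A] (map inr w)) /\
  (forall alpha w, gens alpha w -> derives G alpha (map inr w)).
Proof.
apply: gen_gens_ind => [A alpha w HA _ IH|//|a alpha w _ IH|B alpha u w _ IHu _ IHw].
- by apply: derives_step IH; have := Step [::] [::] HA; rewrite /= cats0.
- exact: derives_refl.
- by have := derives_frame [:: inr a] [::] IH; rewrite !cats0.
- rewrite map_cat; apply: derives_trans (_ : derives G (map inr u ++ alpha) _).
    exact: (derives_frame [::] alpha IHu).
  by have := derives_frame (map inr u) [::] IHw; rewrite !cats0.
Qed.

Lemma grammar_langE w : grammar_lang G w <-> gen (start G) w.
Proof.
split=> [/derives_gens H|]; last exact: (proj1 gen_derives).
inversion H as [| |? ? u ? Hu Hnil]; inversion Hnil; subst.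
by rewrite cats0.
Qed.

End GrammarTrees.

Section UnaryGrammar.

(* [rule A c xs] is a production A -> a^c xs of a grammar over a one-letter
   alphabet; only the multiset xs matters. [ugen A n s h]: A derives a^n by a
   tree with s nodes and height h. *)
Variables (X : Type) (rule : X -> nat -> seq X -> Prop).

Inductive ugen : X -> nat -> nat -> nat -> Prop :=
| ugen_rule A c xs n s h : rule A c xs -> ugens xs n s h -> ugen A (c + n) s.+1 h.+1
with ugens : seq X -> nat -> nat -> nat -> Prop :=
| ugens_nil : ugens [::] 0 0 0
| ugens_cons x xs n1 s1 h1 n2 s2 h2 :
    ugen x n1 s1 h1 -> ugens xs n2 s2 h2 ->
    ugens (x :: xs) (n1 + n2) (s1 + s2) (maxn h1 h2).

Scheme ugen_mut_ind := Induction for ugen Sort Prop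
with ugens_mut_ind := Induction for ugens Sort Prop.
Combined Scheme ugen_ugens_ind from ugen_mut_ind, ugens_mut_ind.

Definition uyields A n := exists s h, ugen A n s h.

Fixpoint sum_over (Q : X -> nat -> Prop) (xs : seq X) (n : nat) : Prop :=
  if xs is x :: xs' then exists n1 n2, [/\ n = n1 + n2, Q x n1 & sum_over Q xs' n2]
  else n = 0.

Lemma ugen_sound (Q : X -> nat -> Prop) :
  (forall A c xs n, rule A c xs -> sum_over Q xs n -> Q A (c + n)) ->
  forall A n, uyields A n -> Q A n.
Proof.
move=> HQ; suff [HA _] : (forall A n s h, ugen A n s h -> Q A n) /\
    (forall xs n s h, ugens xs n s h -> sum_over Q xs n) by move=> A n [s [h /HA]].
apply: ugen_ugens_ind => [A c xs n s h Hr _|//|x xs n1 s1 h1 n2 s2 h2 _ Hx _ Hxs].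
  exact: HQ.
by exists n1, n2.
Qed.

Lemma uyields_rule A c xs n : rule A c xs -> sum_over uyields xs n -> uyields A (c + n).
Proof.
move=> Hr Hxs; suff [s [h {}Hxs]] : exists s h, ugens xs n s h.
  by exists s.+1, h.+1; apply: ugen_rule Hr Hxs.
elim: xs n Hxs {Hr} => [n /= ->|x xs IH n [n1 [n2 [-> [s1 [h1 Hx]] /IH [s2 [h2 Hxs]]]]]].
  by exists 0, 0; apply: ugens_nil.
by exists (s1 + s2), (maxn h1 h2); apply: ugens_cons Hx Hxs.
Qed.

Lemma ugens_cat xs ys n1 s1 h1 n2 s2 h2 :
  ugens xs n1 s1 h1 -> ugens ys n2 s2 h2 ->
  ugens (xs ++ ys) (n1 + n2) (s1 + s2) (maxn h1 h2).
Proof.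
elim=> {xs n1 s1 h1} [|x xs n1 s1 h1 n s h Hx _ IH] Hys /=; first by rewrite max0n.
by rewrite -!addnA -maxnA; apply: ugens_cons Hx (IH Hys).
Qed.

Variant ugens_hole (xs : seq X) (x : X) (e s : nat) : Prop :=
  UgensHole ys zs n1 s1 h1 n2 s2 h2 of
    xs = ys ++ x :: zs & ugens ys n1 s1 h1 & ugens zs n2 s2 h2 &
    e = n1 + n2 & s = s1 + s2.

Lemma ugens_hole_plug xs x e k m s h :
  ugens_hole xs x e k -> ugen x m s h -> exists h', ugens xs (e + m) (k + s) h'.
Proof.
case=> ys zs n1 s1 h1 n2 s2 h2 -> Hys Hzs -> -> Hx.
have -> : n1 + n2 + m = n1 + (m + n2) by lia.
have -> : s1 + s2 + s = s1 + (s + s2) by lia.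
by eexists; apply: ugens_cat Hys (ugens_cons Hx Hzs).
Qed.

Lemma ugens_max_child xs n s h :
  ugens xs n s h -> 0 < h ->
  exists x m s' e k, [/\ ugen x m s' h, ugens_hole xs x e k, n = e + m & s = k + s'].
Proof.
elim=> {xs n s h} [//|x xs n1 s1 h1 n2 s2 h2 Hx Hxs IH] h_gt0.
case: (leqP h2 h1) => [_|h12].
  exists x, n1, s1, n2, s2; split; [done | | lia | lia].
  exact: (UgensHole (ys := [::]) _ ugens_nil Hxs).
have [y [m [s' [e [k [Hy [ys zs m1 t1 k1 m2 t2 k2 -> Hys Hzs -> ->] -> ->]]]]]] :=
  IH (leq_ltn_trans (leq0n h1) h12).
exists y, m, s', (n1 + m1 + m2), (s1 + t1 + t2).
split; [done | | lia | lia].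
exact: (UgensHole (ys := x :: ys) _ (ugens_cons Hx Hys) Hzs).
Qed.

(* [uctx A B e s]: a derivation tree of A with one leaf left open, labelled
   B; its closed part derives a^e by s nodes. *)
Inductive uctx : X -> X -> nat -> nat -> Prop :=
| uctx_refl B : uctx B B 0 0
| uctx_step A c xs x B e1 s1 e s :
    rule A c xs -> ugens_hole xs x e1 s1 -> uctx x B e s ->
    uctx A B (c + e1 + e) (s1 + s).+1.

Lemma uctx_trans A B C e s e' s' :
  uctx A B e s -> uctx B C e' s' -> uctx A C (e + e') (s + s').
Proof.
elim=> {A B e s} // A c xs x B e1 s1 e s Hr Hh _ IH /IH HC.
have -> : c + e1 + e + e' = c + e1 + (e + e') by lia.
have -> : (s1 + s).+1 + s' = (s1 + (s + s')).+1 by lia.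
exact: uctx_step Hr Hh HC.
Qed.

Lemma uctx_plug A B e s m s' h' :
  uctx A B e s -> ugen B m s' h' -> exists h, ugen A (e + m) (s + s') h.
Proof.
elim=> {A B e s} [B|A c xs x B e1 s1 e s Hr Hh _ IH] HB; first by exists h'.
have [h Hx] := IH HB; have [h'' Hxs] := ugens_hole_plug Hh Hx.
have -> : c + e1 + e + m = c + (e1 + (e + m)) by lia.
have -> : (s1 + s).+1 + s' = (s1 + (s + s')).+1 by lia.
by exists h''.+1; apply: ugen_rule Hr Hxs.
Qed.

Lemma uctx_pow C e s k : uctx C C e s -> uctx C C (k * e) (k * s).
Proof.
move=> HC; elim: k => [|k IH]; first exact: uctx_refl.
by rewrite !mulSn; apply: uctx_trans HC IH.
Qed.

Lemma ugen_max_child A n s h :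
  ugen A n s h -> 1 < h ->
  exists B e k m s', [/\ uctx A B e k.+1, ugen B m s' h.-1, n = e + m & s = k.+1 + s'].
Proof.
case=> {}A c xs {}n {}s {}h Hr Hxs h_gt0.
have [x [m [s' [e [k [Hx Hh -> ->]]]]]] := ugens_max_child Hxs h_gt0.
exists x, (c + e), k, m, s'; split; [ | done | lia | lia].
by have := uctx_step Hr Hh (uctx_refl x); rewrite !addn0.
Qed.

Variant pumpable (A : X) (n s e : nat) : Prop :=
  Pumpable C e1 s1 s2 m s3 h of
    uctx A C e1 s1 & uctx C C e s2.+1 & ugen C m s3 h &
    n = e1 + e + m & s = s1 + s2.+1 + s3.

Lemma pumpable_le A n s e : pumpable A n s e -> e <= n.
Proof. by case=> C e1 s1 s2 m s3 h _ _ _ -> _; lia. Qed.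

Lemma pumpable_ctx A B e' k m s e :
  uctx A B e' k -> pumpable B m s e -> pumpable A (e' + m) (k + s) e.
Proof.
move=> HAB [C e1 s1 s2 m' s3 h HBC HCC HC -> ->].
apply: Pumpable (uctx_trans HAB HBC) HCC HC _ _; lia.
Qed.

Lemma pumpable_pump A n s e k : pumpable A n s e -> uyields A (n + k * e).
Proof.
case=> C e1 s1 s2 m s3 h HAC HCC HC -> _.
have [h' H] := uctx_plug (uctx_trans HAC (uctx_pow k.+1 HCC)) HC.
exists (s1 + k.+1 * s2.+1 + s3), h'.
by have -> : e1 + e + m + k * e = e1 + k.+1 * e + m by rewrite mulSn; lia.
Qed.

Lemma pumpable0_shrink A n s :
  pumpable A n s 0 -> exists s' h, s' < s /\ ugen A n s' h.
Proof.
case=> C e1 s1 s2 m s3 h HAC _ HC -> ->.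
have [h' H] := uctx_plug HAC HC.
by exists (s1 + s3), h'; split; [lia | rewrite addn0].
Qed.

End UnaryGrammar.

Section UnaryPumping.

Variables (X : finType) (rule : X -> nat -> seq X -> Prop) (C : nat).
Hypothesis rule_small : forall A c xs, rule A c xs -> c + size xs <= C.

Local Notation ugen := (ugen rule).
Local Notation ugens := (ugens rule).
Local Notation uctx := (uctx rule).

Lemma ugen_yield_bound :
  (forall A n s h, ugen A n s h -> n <= C.+1 ^ h) /\
  (forall xs n s h, ugens xs n s h -> n <= size xs * C.+1 ^ h).
Proof.
apply: ugen_ugens_ind => [A c xs n s h /rule_small Hr _ IH|//|].
  rewrite expnS; have := leq_mul (leq_addl c (size xs)) (leqnn (C.+1 ^ h)).
  have : 0 < C.+1 ^ h by rewrite expn_gt0.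
  nia.
move=> x xs n1 s1 h1 n2 s2 h2 _ IH1 _ IH2 /=.
have := leq_pexp2l (ltn0Sn C) (leq_maxl h1 h2).
have := leq_pexp2l (ltn0Sn C) (leq_maxr h1 h2).
nia.
Qed.

Lemma ugen_pumpable_or_reaches (V : {set X}) A n s h :
  ugen A n s h -> #|X| < #|V| + h ->
  (exists e, pumpable rule A n s e) \/
  exists B e s1 m s2 h', [/\ B \in V, uctx A B e s1, ugen B m s2 h', n = e + m & s = s1 + s2].
Proof.
elim: h => [|h IH] in V A n s *.
  by move=> _; rewrite addn0 ltnNge max_card.
move=> HA hV; case: (boolP (A \in V)) => [AV|AV].
  by right; exists A, 0, 0, n, s, h.+1; split=> //; apply: uctx_refl.
have VA : #|A |: V| = #|V|.+1 by rewrite cardsU1 AV.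
have h_gt0 : 0 < h by have := max_card (A |: V); lia.
have [B [e [k [m [s' [HAB HB -> ->]]]]]] := ugen_max_child HA h_gt0.
case: (IH (A |: V) B m s' HB); first lia.
  by move=> [e' Hp]; left; exists e'; apply: pumpable_ctx HAB Hp.
move=> [D [e1 [s1 [m' [s2 [h' [+ HBD HD -> ->]]]]]]].
rewrite in_setU1 => /orP [/eqP DA|DV]; last first.
  right; exists D, (e + e1), (k.+1 + s1), m', s2, h'.
  by split; [done | apply: uctx_trans HAB HBD | done | lia | lia].
subst D; left; exists (e + e1).
have HAA : uctx A A (e + e1) (k + s1).+1 by rewrite -addSn; apply: uctx_trans HAB HBD.
by apply: Pumpable (uctx_refl rule A) HAA HD _ _; lia.
Qed.

Lemma ugen_pumpable A n s h :
  ugen A n s h -> #|X| < h -> exists2 e, e <= C.+1 ^ #|X|.+1 & pumpable rule A n s e.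
Proof.
elim: h => [//|h IH] in A n s *; move=> HA.
rewrite ltnS leq_eqVlt => /orP [/eqP Eh|hX].
  have [|[e Hp]|[B [? [? [? [? [? [B0 _]]]]]]]] := ugen_pumpable_or_reaches (V := set0) HA.
  - by rewrite cards0 -Eh.
  - exists e => //; apply: leq_trans (pumpable_le Hp) _.
    by rewrite Eh; apply: (proj1 ugen_yield_bound) HA.
  - by rewrite inE in B0.
have [B [e [k [m [s' [HAB HB -> ->]]]]]] := ugen_max_child HA (leq_ltn_trans (leq0n _) hX).
have [e' He' Hp] := IH B m s' HB hX.
by exists e' => //; apply: pumpable_ctx HAB Hp.
Qed.

Lemma uyields_pump :
  exists T p, 0 < p /\ forall A n, T < n -> uyields rule A n -> uyields rule A (n + p).
Proof.
pose b := C.+1 ^ #|X|.+1.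
exists (C.+1 ^ #|X|), b`!; split=> [|A n Tn [s [h' H']]]; first exact: fact_gt0.
have Hex : exists s, `[< exists h, ugen A n s h >] by exists s; apply/asboolP; exists h'.
case: (ex_minnP Hex) => s0 /asboolP [h H] s0_min.
have Xh : #|X| < h.
  rewrite ltnNge; apply: contraL Tn => hX; rewrite -leqNgt.
  exact: leq_trans (proj1 ugen_yield_bound _ _ _ _ H) (leq_pexp2l (ltn0Sn C) hX).
(* By minimality the cycle adds e > 0 letters, and e <= b divides b`!. *)
have [[|e] eb Hp] := ugen_pumpable H Xh.
  have [s' [h'' [lt_s' H'']]] := pumpable0_shrink Hp.
  by have := s0_min s' (asboolT (ex_intro _ h'' H'')); lia.
have := pumpable_pump (b`! %/ e.+1) Hp.
by rewrite divnK // dvdn_fact // eb.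
Qed.

End UnaryPumping.

Definition periodic_from (T p : nat) (P : nat -> Prop) :=
  forall n, T <= n -> P (n + p) <-> P n.

Lemma periodic_from_iter T p P k n :
  periodic_from T p P -> T <= n -> P (n + k * p) <-> P n.
Proof.
move=> HP Tn; elim: k => [|k IH]; first by rewrite addn0.
by rewrite mulSn addnCA addnC HP ?IH //; apply: leq_trans Tn (leq_addr _ _).
Qed.

Lemma eq_periodic_from T p (P Q : nat -> Prop) :
  (forall n, P n <-> Q n) -> periodic_from T p P -> periodic_from T p Q.
Proof. by move=> E HP n Tn; rewrite -!E; apply: HP. Qed.

Section PeriodicOfShift.

Variables (I : finType) (P : I -> nat -> Prop) (T p : nat).
Hypothesis p_gt0 : 0 < p.
Hypothesis P_shift : forall i n, T < n -> P i n -> P i (n + p).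

Lemma P_shift_iter k i n : T < n -> P i n -> P i (n + k * p).
Proof.
move=> Tn; elim: k => [|k IH]; first by rewrite addn0.
by rewrite mulSn addnCA addnC => /IH /P_shift; apply; apply: leq_trans Tn (leq_addr _ _).
Qed.

(* Beyond the largest of the least witnesses of each residue class, shifting
   back by p preserves P. *)
Lemma periodic_of_shift : exists T', forall i, periodic_from T' p (P i).
Proof.
have /choice [f Hf] : forall x : I * 'I_p, exists b,
    (exists n, [/\ T < n, n %% p = x.2 & P x.1 n]) ->
    exists n, [/\ T < n, n <= b, n %% p = x.2 & P x.1 n].
  move=> x; case: (pselect (exists n, [/\ T < n, n %% p = x.2 & P x.1 n])).
    by move=> [n [Tn Hn Pn]]; exists n => _; exists n.
  by move=> nP; exists 0 => /nP.
exists (maxn T (\max_x f x)).+1 => i n Tn; split; last first.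
  by apply: P_shift; apply: leq_trans Tn; rewrite ltnS leq_maxl.
move=> Pnp; pose r := Ordinal (ltn_pmod n p_gt0).
have [|n0 [T_n0 n0_le n0_mod Pn0]] := Hf (i, r).
  by exists (n + p); split; [lia | rewrite modnDr | done].
have n0_n : n0 <= n.
  apply: leq_trans n0_le _; apply: leq_trans (leq_bigmax (i, r)) _; lia.
have /dvdnP [k Ek] : p %| n - n0.
  by rewrite -(eqn_mod_dvd _ n0_n) n0_mod.
have -> : n = n0 + k * p by lia.
exact: P_shift_iter.
Qed.

End PeriodicOfShift.

Section Residue.

Variables (T p : nat).
Hypothesis p_gt0 : 0 < p.

Definition residue n := if n < T then n else T + (n - T) %% p.

Lemma residue_lt n : residue n < T + p.
Proof. by rewrite /residue; case: (ltnP n T) => [|_]; [lia | rewrite ltn_add2l ltn_pmod]. Qed.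

Lemma residue_succ n : residue (residue n).+1 = residue n.+1.
Proof.
rewrite /residue; case: (ltnP n T) => [//|Tn].
rewrite !ifN -?leqNgt; [|lia|lia].
by rewrite -addnS addKn -addn1 modnDml addn1 subSn.
Qed.

Definition ord_residue n : 'I_(T + p) := Ordinal (residue_lt n).

Lemma ord_residue_succ n : ord_residue (ord_residue n).+1 = ord_residue n.+1.
Proof. by apply: val_inj; rewrite /= residue_succ. Qed.

Lemma residue_periodic P n : periodic_from T p P -> P (residue n) <-> P n.
Proof.
rewrite /residue; case: (ltnP n T) => // Tn HP.
rewrite -(periodic_from_iter ((n - T) %/ p) HP) ?leq_addr //.
by rewrite addnAC -addnA -divn_eq subnKC.
Qed.

End Residue.

Section Recognizable.

Variable Sigma : finType.
Implicit Types (L : lang Sigma) (u v w : seq Sigma).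

(* L is saturated by a map into a finite type that is compatible with appending
   a letter: the map is then the run of an automaton recognizing L. *)
Definition recognizable L :=
  exists (Q : finType) (s : seq Sigma -> Q) (d : Q -> Sigma -> Q),
    (forall u a, s (rcons u a) = d (s u) a) /\ (forall u v, s u = s v -> L u -> L v).

Lemma recognizable_regular L : recognizable L -> regular L.
Proof.
move=> [Q [s [d [s_rcons s_sat]]]].
exists Q, d, (s [::]), (fun q => `[< exists u, s u = q /\ L u >]) => w.
have -> : foldl d (s [::]) w = s w.
  by elim/last_ind: w => //= w a IH; rewrite foldl_rcons IH s_rcons.
split=> [Lw|/asboolP [u [su Lu]]]; last exact: s_sat su Lu.
by apply/asboolP; exists w.
Qed.

Lemma eq_recognizable L1 L2 :
  (forall w, L1 w <-> L2 w) -> recognizable L1 -> recognizable L2.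
Proof.
move=> E [Q [s [d [s_rcons s_sat]]]]; exists Q, s, d; split=> // u v suv /E Lu.
by apply/E; apply: s_sat suv Lu.
Qed.

Lemma recognizable_and L1 L2 :
  recognizable L1 -> recognizable L2 -> recognizable (fun w => L1 w /\ L2 w).
Proof.
move=> [Q1 [s1 [d1 [s1_rcons s1_sat]]]] [Q2 [s2 [d2 [s2_rcons s2_sat]]]].
exists (Q1 * Q2)%type, (fun u => (s1 u, s2 u)), (fun q a => (d1 q.1 a, d2 q.2 a)).
split=> [u a|u v [su1 su2] [L1u L2u]]; first by rewrite s1_rcons s2_rcons.
by split; [apply: s1_sat su1 L1u | apply: s2_sat su2 L2u].
Qed.

Lemma recognizable_nil : recognizable (fun w => w = [::]).
Proof.
exists bool, (fun u => nilp u), (fun _ _ => false).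
by split=> [[]|[|? ?] [|? ?]].
Qed.

Definition lang_cat L1 L2 : lang Sigma :=
  fun w => exists u v, [/\ w = u ++ v, L1 u & L2 v].

(* Subset construction: besides the state of u for L1, remember the states for
   L2 of all suffixes of u whose prefix lies in L1. *)
Lemma recognizable_cat L1 L2 :
  recognizable L1 -> recognizable L2 -> recognizable (lang_cat L1 L2).
Proof.
move=> [Q1 [s1 [d1 [s1_rcons s1_sat]]]] [Q2 [s2 [d2 [s2_rcons s2_sat]]]].
pose S u := [set q | `[< exists y x, [/\ u = y ++ x, L1 y & s2 x = q] >]].
pose acc1 q := `[< exists y, s1 y = q /\ L1 y >].
pose d (q : Q1 * {set Q2}) a := (d1 q.1 a,
  [set q' | (acc1 (d1 q.1 a) && (q' == s2 [::])) || [exists q'' in q.2, q' == d2 q'' a]]).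
exists (Q1 * {set Q2})%type, (fun u => (s1 u, S u)), d; split.
  move=> u a; congr pair; first exact: s1_rcons.
  apply/setP => q; rewrite !inE; apply/asboolP/idP.
    move=> [y [x [+ L1y <-]]]; case/lastP: x => [|x b].
      rewrite cats0 => Ey; subst y; apply/orP; left; rewrite eqxx andbT.
      by apply/asboolP; exists (rcons u a); rewrite s1_rcons.
    rewrite -rcons_cat => /rcons_inj [-> ->]; apply/orP; right.
    apply/existsP; exists (s2 x); rewrite inE s2_rcons eqxx andbT.
    by apply/asboolP; exists y, x.
  case/orP => [/andP [/asboolP [y [sy L1y]] /eqP ->]|/existsP [q' /andP [+ /eqP ->]]].
    exists (rcons u a), [::]; rewrite cats0; split=> //.
    by apply: s1_sat L1y; rewrite sy s1_rcons.
  rewrite inE => /asboolP [y [x [-> L1y <-]]].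
  by exists y, (rcons x a); rewrite rcons_cat s2_rcons.
move=> u v [_ Suv] [y [x [Eu L1y L2x]]].
have : s2 x \in S v by rewrite -Suv inE; apply/asboolP; exists y, x.
rewrite inE => /asboolP [y' [x' [-> L1y' sx']]].
by exists y', x'; split=> //; apply: s2_sat L2x; rewrite sx'.
Qed.

Definition star_word v : lang Sigma := fun w => exists n, w = flatten (nseq n v).

Lemma size_flatten_nseq v n : size (flatten (nseq n v)) = n * size v.
Proof. by elim: n => //= n IH; rewrite size_cat IH mulSn. Qed.

Lemma nth_flatten_nseq x v n i :
  i < n * size v -> nth x (flatten (nseq n v)) i = nth x v (i %% size v).
Proof.
elim: n i => // n IH i lt_i; rewrite /= nth_cat.
case: (ltnP i (size v)) => [iv|vi]; first by rewrite modn_small.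
rewrite IH; last by rewrite mulSn in lt_i; lia.
by rewrite -{2}(subnK vi) modnDr.
Qed.

Definition prefix_of_pow v u := forall x i, i < size u -> nth x u i = nth x v (i %% size v).

Section StarWord.

Variable v : seq Sigma.
Hypothesis v_gt0 : 0 < size v.

Lemma star_wordE w : star_word v w <-> prefix_of_pow v w /\ size v %| size w.
Proof.
split=> [[n ->]|[Hw /dvdnP [n Ew]]].
  rewrite size_flatten_nseq dvdn_mull //; split=> // x i.
  by rewrite size_flatten_nseq; apply: nth_flatten_nseq.
have [x0 _] : exists x0 : Sigma, True by case: (v) v_gt0 => // x0; exists x0.
exists n; apply: (@eq_from_nth _ x0) => [|i]; first by rewrite size_flatten_nseq.
by move=> lt_i; rewrite Hw // nth_flatten_nseq // -Ew.
Qed.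

Lemma prefix_of_pow_rcons u a :
  prefix_of_pow v (rcons u a) <-> prefix_of_pow v u /\ a = nth a v (size u %% size v).
Proof.
split=> [Hua|[Hu Ea] x i].
  split=> [x i lt_i|].
    by rewrite -Hua; [rewrite nth_rcons lt_i | rewrite size_rcons leqW].
  by rewrite -(Hua a (size u)); [rewrite nth_rcons ltnn eqxx | rewrite size_rcons].
rewrite size_rcons ltnS leq_eqVlt nth_rcons => /orP [/eqP ->|lt_i].
  by rewrite ltnn eqxx Ea; apply: set_nth_default; rewrite ltn_pmod.
by rewrite lt_i Hu.
Qed.

(* The state of u is whether u is a prefix of v v v ..., and |u| mod |v|. *)
Lemma recognizable_star_word_pos : recognizable (star_word v).
Proof.
pose r n : 'I_(size v) := Ordinal (ltn_pmod n v_gt0).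
exists (bool * 'I_(size v))%type, (fun u => (`[< prefix_of_pow v u >], r (size u))).
exists (fun (q : bool * 'I_(size v)) a => (q.1 && (a == nth a v q.2), r q.2.+1)).
split=> [u a|u w [pu ru]].
  congr pair; first exact: asbool_equiv_eqP (andPP (asboolP _) eqP) (prefix_of_pow_rcons u a).
  by apply: val_inj; rewrite /= size_rcons -[in RHS]addn1 modnDml addn1.
by rewrite !star_wordE /dvdn ru => -[/asboolP]; rewrite pu => /asboolP.
Qed.

End StarWord.

Lemma recognizable_star_word v : recognizable (star_word v).
Proof.
case: (posnP (size v)) => [/size0nil ->|]; last exact: recognizable_star_word_pos.
apply: eq_recognizable recognizable_nil => w.
by split=> [->|[n ->]]; [exists 0 | elim: n].
Qed.

Lemma in_star_prod_cons v ws w :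
  in_star_prod (v :: ws) w <-> lang_cat (star_word v) (in_star_prod ws) w.
Proof.
split=> [[ns [Ens ->]]|[_ [x [-> [n ->] [ns [Ens ->]]]]]].
  case: ns Ens => [//|n ns [Ens]] /=.
  by do 2 eexists; split; [|exists n|exists ns].
by exists (n :: ns); rewrite /= Ens.
Qed.

Lemma recognizable_in_star_prod ws : recognizable (in_star_prod ws).
Proof.
elim: ws => [|v ws IH].
  apply: eq_recognizable recognizable_nil => w.
  by split=> [->|[[|? ?] [_ ->]]] //; exists [::].
apply: eq_recognizable (recognizable_cat (recognizable_star_word v) IH) => w.
by rewrite in_star_prod_cons.
Qed.

End Recognizable.

Section PsiFacts.

Variable Sigma : Type.
Implicit Types (u w : seq Sigma) (a b : Sigma).

Lemma PsiE w b j : Psi w (b, j) <-> exists2 i, i < size w & b = nth b w i /\ j = size w - i.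
Proof. by split=> -[i lt_i [Eb Ej]]; exists i; rewrite // Ej {1}Eb. Qed.

Lemma Psi_seq1 a b j : Psi [:: a] (b, j) <-> b = a /\ j = 1.
Proof. by rewrite PsiE; split=> [[[|//] _ [-> ->]]|[-> ->]]; last exists 0. Qed.

Lemma Psi_cat u w b j :
  Psi (u ++ w) (b, j) <-> Psi w (b, j) \/ exists2 k, Psi u (b, k) & j = k + size w.
Proof.
rewrite !PsiE size_cat; split=> [[i lt_i []]|[[i lt_i [Eb ->]]|[k]]].
- rewrite nth_cat; case: ltnP => [iu|ui] Eb ->.
    by right; exists (size u - i); [rewrite PsiE; exists i | lia].
  by left; exists (i - size u); [lia | split=> //; lia].
- exists (size u + i); first lia.
  by rewrite nth_cat ltnNge leq_addr addKn; split=> //; lia.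
- rewrite PsiE => -[i lt_i [Eb ->]] ->.
  by exists i; [lia | rewrite nth_cat lt_i; split=> //; lia].
Qed.

End PsiFacts.

Section PeriodicRecognizable.

Variables (Sigma : finType) (T p : nat).
Hypothesis p_gt0 : 0 < p.

Local Notation r := (ord_residue T p_gt0).

Lemma recognizable_size (P : nat -> Prop) :
  periodic_from T p P -> recognizable (fun w : seq Sigma => P (size w)).
Proof.
move=> HP; exists 'I_(T + p), (fun u => r (size u)), (fun (q : 'I_(T + p)) _ => r q.+1).
split=> [u a|u w /(f_equal val) /= Euw]; first by rewrite size_rcons ord_residue_succ.
by rewrite -(residue_periodic _ HP) Euw residue_periodic.
Qed.

(* The state of u is the finite set of the pairs of Psi(u) with their second
   component reduced to its residue. *)
Lemma recognizable_Psi (P : Sigma -> nat -> Prop) :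
  (forall b, periodic_from T p (P b)) ->
  recognizable (fun w => forall b j, Psi w (b, j) -> P b j).
Proof.
move=> HP.
pose s u := [set x : Sigma * 'I_(T + p) | `[< exists j, Psi u (x.1, j) /\ r j = x.2 >]].
exists {set Sigma * 'I_(T + p)}, s.
exists (fun (S : {set Sigma * 'I_(T + p)}) a =>
  [set x | (x == (a, r 1)) || [exists y in S, x == (y.1, r y.2.+1)]]).
split=> [u a|u w Suw Hu b j Hw].
  apply/setP => -[b q]; rewrite !inE -cats1 /=; apply/asboolP/idP.
    move=> [j [/Psi_cat [/Psi_seq1 [-> ->]|[k Hk ->]] <-]]; first by rewrite eqxx.
    apply/orP; right; apply/existsP; exists (b, r k).
    by rewrite inE /= addn1 ord_residue_succ eqxx andbT; apply/asboolP; exists k.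
  case/orP => [/eqP [-> ->]|/existsP [[b' q'] /andP [+ /eqP [-> ->]]]].
    by exists 1; split=> //; apply/Psi_cat; left; apply/Psi_seq1.
  rewrite inE /= => /asboolP [k [Hk <-]].
  exists k.+1; rewrite ord_residue_succ; split=> //.
  by apply/Psi_cat; right; exists k; rewrite ?addn1.
have : (b, r j) \in s u by rewrite Suw inE; apply/asboolP; exists j.
rewrite inE => /asboolP [k [/Hu Pk /(f_equal val) /= Ekj]].
by rewrite -(residue_periodic _ (HP b)) -Ekj residue_periodic.
Qed.

End PeriodicRecognizable.

Section PsiGrammar.

Variables (N Sigma : finType) (G : grammar N Sigma).
Implicit Types (alpha beta gamma : seq (N + Sigma)) (xs : seq (N + Sigma * N)).

Definition terms alpha := count (fun z => if z is inr _ then true else false) alpha.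
Definition nonterms alpha := pmap (fun z => if z is inl B then Some B else None) alpha.

Lemma terms_nonterms alpha : terms alpha + size (nonterms alpha) = size alpha.
Proof. by elim: alpha => // -[B|a] alpha; rewrite /terms /nonterms /=; lia. Qed.

Definition productive beta := exists u, gens G beta u.

(* A production alpha = beta y gamma for a position of the letter b inside the
   part of the word generated by y; the prefix beta only has to be productive. *)
Definition psi_split (b : Sigma) alpha c xs := exists beta y gamma,
  [/\ alpha = beta ++ y :: gamma, productive beta &
      [/\ y = inr b, c = (terms gamma).+1 & xs = map inl (nonterms gamma)] \/
      exists B, [/\ y = inl B, c = terms gamma & xs = inr (b, B) :: map inl (nonterms gamma)]].

(* inl A derives the lengths of the words generated by A, and inr (b, A) the
   numbers j such that (b, j) is in Psi of such a word. *)
Definition psi_rule (x : N + Sigma * N) c xs : Prop :=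
  match x with
  | inl A => exists2 alpha, List.In (A, alpha) (productions G) &
               c = terms alpha /\ xs = map inl (nonterms alpha)
  | inr (b, A) => exists2 alpha, List.In (A, alpha) (productions G) & psi_split b alpha c xs
  end.

Definition psi_target (x : N + Sigma * N) n : Prop :=
  match x with
  | inl A => exists2 w, gen G A w & size w = n
  | inr (b, A) => exists2 w, gen G A w & Psi w (b, n)
  end.

Definition max_rhs := \max_(r <- productions G) size r.2.

Lemma size_rhs_le A alpha : List.In (A, alpha) (productions G) -> size alpha <= max_rhs.
Proof.
rewrite /max_rhs; elim: (productions G) => //= r rs IH; rewrite big_cons.
by case=> [->|/IH /leq_trans]; [apply: leq_maxl | apply; apply: leq_maxr].
Qed.

Lemma psi_rule_small x c xs : psi_rule x c xs -> c + size xs <= max_rhs.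
Proof.
case: x => [A|[b A]] [alpha /size_rhs_le le_alpha].
  by move=> [-> ->]; rewrite size_map terms_nonterms.
move=> [beta [y [gamma [Ealpha _ Hy]]]]; apply: leq_trans le_alpha.
have := terms_nonterms gamma; rewrite Ealpha size_cat /=.
by case: Hy => [[_ -> ->]|[B [_ -> ->]]] /=; rewrite size_map; lia.
Qed.

Lemma sum_over_gens alpha n :
  sum_over psi_target (map inl (nonterms alpha)) n ->
  exists2 w, gens G alpha w & size w = terms alpha + n.
Proof.
elim: alpha n => [n /= ->|[B|a] alpha IH n]; first by exists [::]; [apply: gens_nil|].
  move=> [n1 [n2 [-> [u Hu <-] /IH [w Hw Ew]]]].
  by exists (u ++ w); [apply: gens_nonterm | rewrite size_cat Ew /terms /=; lia].
move=> /IH [w Hw Ew].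
by exists (a :: w); [apply: gens_term | rewrite /= Ew].
Qed.

Lemma psi_rule_sound x c xs n :
  psi_rule x c xs -> sum_over psi_target xs n -> psi_target x (c + n).
Proof.
case: x => [A|[b A]] [alpha HA].
  by move=> [-> ->] /sum_over_gens [w Hw <-]; exists w => //; apply: gen_rule HA Hw.
move=> [beta [y [gamma [Ealpha [u Hu] [[Ey -> ->]|[B [Ey -> ->]]]]]]]; subst alpha y.
  move=> /sum_over_gens [w Hw Ew]; exists (u ++ [:: b] ++ w).
    by apply: gen_rule HA _; apply: gens_cat Hu (gens_term _ Hw).
  by apply/Psi_cat; left; apply/Psi_cat; right; exists 1; [apply/Psi_seq1 | rewrite Ew; lia].
move=> [j [n' [-> [v Hv Pv] /sum_over_gens [w Hw Ew]]]]; exists (u ++ v ++ w).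
  by apply: gen_rule HA _; apply: gens_cat Hu (gens_nonterm Hv Hw).
by apply/Psi_cat; left; apply/Psi_cat; right; exists j => //; rewrite Ew; lia.
Qed.

Lemma psi_split_cons z b alpha c xs :
  productive [:: z] -> psi_split b alpha c xs -> psi_split b (z :: alpha) c xs.
Proof.
move=> [u Hu] [beta [y [gamma [-> [v Hv] Hy]]]].
by exists (z :: beta), y, gamma; split=> //; exists (u ++ v); apply: (gens_cat Hu Hv).
Qed.

Lemma gen_psi_complete :
  (forall A w, gen G A w -> uyields psi_rule (inl A) (size w) /\
     forall b j, Psi w (b, j) -> uyields psi_rule (inr (b, A)) j) /\
  (forall alpha w, gens G alpha w ->
     (exists2 n, sum_over (uyields psi_rule) (map inl (nonterms alpha)) n &
        size w = terms alpha + n) /\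
     forall b j, Psi w (b, j) -> exists c xs n,
       [/\ psi_split b alpha c xs, sum_over (uyields psi_rule) xs n & j = c + n]).
Proof.
apply: gen_gens_ind.
- move=> A alpha w HA _ [[n Hn ->] Hpsi]; split=> [|b j /Hpsi [c [xs [n' [Hs Hn' ->]]]]].
    by apply: uyields_rule Hn; exists alpha.
  by apply: uyields_rule Hn'; exists alpha.
- by split=> [|b j /PsiE []]; first exists 0.
- move=> a alpha w _ [[n Hn Ew] Hpsi]; split=> [|b j].
    by exists n => //; rewrite /= Ew.
  rewrite -cat1s => /Psi_cat [/Hpsi [c [xs [n' [Hs Hn' ->]]]]|[k /Psi_seq1 [-> ->] ->]].
    exists c, xs, n'; split=> //; apply: psi_split_cons Hs.
    by exists [:: a]; apply/gens_term/gens_nil.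
  exists (terms alpha).+1, (map inl (nonterms alpha)), n; split=> //; last by rewrite Ew; lia.
  exists [::], (inr a), alpha; split=> //; first by exists [::]; apply: gens_nil.
  by left.
- move=> B alpha u w Hu [Hlen Hpsi_u] _ [[n Hn Ew] Hpsi]; split=> [|b j].
    by exists (size u + n); [exists (size u), n | rewrite size_cat Ew /terms /=; lia].
  case/Psi_cat => [/Hpsi [c [xs [n' [Hs Hn' ->]]]]|[k /Hpsi_u Hk ->]].
    exists c, xs, n'; split=> //; apply: psi_split_cons Hs.
    by exists (u ++ [::]); apply: gens_nonterm Hu _; apply: gens_nil.
  exists (terms alpha), (inr (b, B) :: map inl (nonterms alpha)), (k + n).
  split; [|by exists k, n|by rewrite Ew; lia].
  exists [::], (inl B), alpha; split=> //; first by exists [::]; apply: gens_nil.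
  by right; exists B.
Qed.

Lemma uyields_psiP x n : uyields psi_rule x n <-> psi_target x n.
Proof.
split; first by apply: ugen_sound => ? ? ? ?; apply: psi_rule_sound.
case: x => [A|[b A]] [w /(proj1 gen_psi_complete) [Hlen Hpsi] Hw]; last exact: Hpsi.
by rewrite -Hw.
Qed.

End PsiGrammar.

Lemma context_free_periodic (Sigma : finType) (K : lang Sigma) :
  context_free K ->
  exists T p, [/\ 0 < p, periodic_from T p (lengths K) &
                  forall b, periodic_from T p (fun j => PsiL K (b, j))].
Proof.
move=> [N [G HK]].
have [T0 [p [p_gt0 Hshift]]] := uyields_pump (@psi_rule_small _ _ G).
have [T HT] := periodic_of_shift p_gt0 Hshift.
exists T, p; split=> // [|b].
  apply: eq_periodic_from (HT (inl (start G))) => n; rewrite uyields_psiP /=.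
  by split=> [[w /grammar_langE /HK Hw <-]|[w /HK /grammar_langE Hw <-]]; exists w.
apply: eq_periodic_from (HT (inr (b, start G))) => n; rewrite uyields_psiP /=.
by split=> [[w /grammar_langE /HK Hw Hb]|[w /HK /grammar_langE Hw Hb]]; exists w.
Qed.

Theorem lemma12 (Sigma : finType) (K : lang Sigma) :
  context_free K -> bounded K ->
  exists R : lang Sigma,
    [/\ regular R, bounded R, (forall w, K w -> R w),
        (forall n, lengths K n <-> lengths R n)
      & (forall p, PsiL K p <-> PsiL R p)].
Proof.
move=> /context_free_periodic [T [p [p_gt0 Klen KPsi]]] [ws Kws].
pose R w := in_star_prod ws w /\
  (lengths K (size w) /\ forall b j, Psi w (b, j) -> PsiL K (b, j)).
have KR w : K w -> R w by move=> Kw; split; [apply: Kws | split=> [|b j]; exists w].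
exists R; split=> [||//|n|[b j]].
- apply/recognizable_regular/recognizable_and; first exact: recognizable_in_star_prod.
  apply: recognizable_and; first exact (recognizable_size Sigma p_gt0 Klen).
  exact (recognizable_Psi p_gt0 KPsi).
- by exists ws => w [].
- by split=> [[w /KR Rw <-]|[w [_ [Kw _]] <-]]; first exists w.
- by split=> [[w /KR Rw Hw]|[w [_ [_ RK]] /RK]]; first exists w.
Qed.
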